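(* Let $x,y$ be vertices of the Farey graph $\mathcal{F}$ with $d_{\mathcal{C}}(x,y)\ge 2$, and let $\mathcal{P}$ be a path in $\mathcal{F}$ joining $x$ and $y$. Then $\mathcal{P}$ is a geodesic in $\mathcal{F}$ if and only if $\mathcal{P}$ is contained in the ladder $\mathcal{L}(x,y)$ and is a geodesic in the graph $\mathcal{L}(x,y)$.
   Context: The Farey graph $\mathcal{F}$ has vertex set $\mathbb{Q}\cup\{\infty\}$ (vertices $p/q$ in lowest terms, $\infty=1/0$), with $p/q$ and $r/s$ adjacent iff $|ps-qr|=1$; $d_{\mathcal{C}}$ is its path metric with unit edge lengths. It is embedded in $\overline{\mathbb{H}}=\mathbb{H}^2\cup\partial\mathbb{H}^2$ (upper half-plane model) with edges realized as hyperbolic geodesics; the closures of the complementary regions are ideal triangles called Farey triangles. For distinct $x,y\in\partial\mathbb{H}^2$, the ladder $\mathcal{L}(x,y)$ is the union of all Farey triangles whose interior meets the hyperbolic geodesic from $x$ to $y$, regarded as the subgraph of $\mathcal{F}$ formed by the vertices and edges of these triangles (with its own path metric). *)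

From HB Require Import structures.
From mathcomp Require Import all_boot all_order all_algebra.
Set Implicit Arguments. Unset Strict Implicit. Unset Printing Implicit Defensive.
Import Order.TTheory GRing.Theory Num.Theory.

(* Vertices of the Farey graph: Q ∪ {∞}; [None] is ∞ = 1/0.
   A rational is stored in lowest terms with positive denominator. *)
Definition fvert := option rat.

Definition fnum (v : fvert) : int := if v is Some r then numq r else 1%R.
Definition fden (v : fvert) : int := if v is Some r then denq r else 0%R.

Definition fadj : rel fvert :=
  fun u v => (`| fnum u * fden v - fden u * fnum v | == 1)%R.

Definition elt (u v : fvert) : bool :=
  match u, v with
  | Some a, Some b => (a < b)%R
  | Some _, None => true
  | None, _ => false
  end.

(* strict cyclic order on the circle ∂H^2 = R ∪ {∞} *)
Definition cyc (u v w : fvert) : bool :=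
  [|| elt u v && elt v w, elt v w && elt w u | elt w u && elt u v].

(* z lies in the closed arc of ∂H^2 with endpoints a, b not containing c *)
Definition in_arc (a b c z : fvert) : bool :=
  [|| z == a, z == b | cyc a z b != cyc a c b].

(* The hyperbolic geodesic from x to y meets the interior of the ideal
   triangle with vertices a, b, c: this fails exactly when x and y lie in
   a common closed complementary arc of {a,b,c}. *)
Definition geod_meets (x y a b c : fvert) : bool :=
  ~~ [|| in_arc a b c x && in_arc a b c y,
         in_arc b c a x && in_arc b c a y
       | in_arc c a b x && in_arc c a b y].

Definition farey_triangle (a b c : fvert) : Prop :=
  fadj a b /\ fadj b c /\ fadj c a.

(* Edge relation of the ladder L(x,y): an edge of a Farey triangle whose
   interior meets the geodesic from x to y. *)
Definition ladder_adj (x y : fvert) (u v : fvert) : Prop :=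
  exists w, farey_triangle u v w /\ geod_meets x y u v w.

(* A path in a graph with edge relation G starting at x: the vertex
   sequence x :: p; it joins x and last x p, and its length is size p. *)
Fixpoint is_path (G : fvert -> fvert -> Prop) (x : fvert) (p : seq fvert) : Prop :=
  if p is y :: p' then G x y /\ is_path G y p' else True.

Definition is_geodesic (G : fvert -> fvert -> Prop) (x : fvert) (p : seq fvert) : Prop :=
  is_path G x p /\
  forall q, is_path G x q -> last x q = last x p -> size p <= size q.

Definition fadjP (u v : fvert) : Prop := fadj u v.

From mathcomp Require Import all_boot all_order all_algebra ring zify.
From Stdlib Require Import Classical.
Set Implicit Arguments.
Unset Strict Implicit.
Unset Printing Implicit Defensive.
Import Order.TTheory GRing.Theory Num.Theory.

(* A vertex p/q is the primitive integer vector (p, q); Farey adjacency is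
   |det| = 1 and the cyclic order on the boundary circle is read off signs of
   determinants.  The determinant identity of Plücker shows that two Farey
   edges never cross, so a Farey path avoiding both ends of an edge stays on
   one side of it.
   Let uv be an edge of a Farey geodesic from x to y and let w be the third
   vertex of one of the two Farey triangles on uv.  By shortcut arguments the
   part of the geodesic before u avoids v and w, and the part after v avoids
   u and w; hence x lies on the side of vw containing u, and y on the side of
   wu containing v.  If the line from x to y missed the interior of both
   triangles on uv, then x and y would both lie in the two closed arcs cut
   out by uv on either side, that is in {u, v}, and they would be adjacent.
   So Farey geodesics lie in the ladder; conversely a ladder geodesic is no
   longer than a shortest Farey path, which lies in the ladder. *)

Section FareyDeterminant.
Local Open Scope ring_scope.

Definition fdet (u v : fvert) : int := fnum u * fden v - fden u * fnum v.

Lemma fadjE u v : fadj u v = (`|fdet u v| == 1).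
Proof. by []. Qed.

Lemma fdet_swap u v : fdet v u = - fdet u v.
Proof. by rewrite /fdet; ring. Qed.

Lemma fadj_sym : symmetric fadj.
Proof. by move=> u v; rewrite !fadjE fdet_swap normrN. Qed.

Lemma fdet_eq0 u v : (fdet u v == 0) = (u == v).
Proof.
apply/eqP/eqP => [|-> ]; last by rewrite /fdet mulrC subrr.
case: u v => [a|] [b|] //=; rewrite /fdet /=.
- move/eqP; rewrite subr_eq0 [denq a * _]mulrC => /eqP h.
  by congr Some; apply/eqP; rewrite rat_eq h.
- by rewrite mulr0 mulr1 sub0r => /eqP; rewrite oppr_eq0 gt_eqF // denq_gt0.
- by rewrite mul1r mul0r subr0 => /eqP; rewrite gt_eqF // denq_gt0.
Qed.

Lemma fadj_neq u v : fadj u v -> u != v.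
Proof. by apply: contraL => /eqP ->; rewrite fadjE /fdet mulrC subrr. Qed.

Lemma elt_fdet u v : elt u v = (fdet u v < 0).
Proof.
case: u v => [a|] [b|] /=; rewrite /fdet /=.
- have -> : (a < b) = lt_rat a b by [].
  by rewrite lt_ratE subr_lt0 [denq a * _]mulrC.
- by rewrite mulr0 mulr1 sub0r oppr_lt0 denq_gt0.
- by rewrite mul1r mul0r subr0 ltNge ltW // denq_gt0.
- by rewrite mulr0 mul0r subrr.
Qed.

Lemma elt_trans u v w : elt u v -> elt v w -> elt u w.
Proof. by case: u v w => [a|] [b|] [c|] //=; apply: lt_trans. Qed.

Lemma elt_asym u v : elt u v -> ~~ elt v u.
Proof. by case: u v => [a|] [b|] //= /lt_gtF ->. Qed.

Lemma mulr_gt0_eqsign (R : realDomainType) (m n : R) : m != 0 -> n != 0 ->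
  (0 < m * n) = ((0 < m) == (0 < n)).
Proof.
move=> m0 n0; case: (ltgtP m 0) m0 => // [m_lt0 | m_gt0] _.
  by rewrite nmulr_rgt0 //; case: (ltgtP n 0) n0.
by rewrite pmulr_rgt0.
Qed.

Lemma cyc_fdet a s b : a != b -> s != a -> s != b ->
  cyc a s b = (elt a b == (0 < fdet a s * fdet s b)).
Proof.
move=> ab sa sb.
have [A0 B0 C0] : [/\ fdet a s != 0, fdet s b != 0 & fdet a b != 0].
  by rewrite !fdet_eq0 eq_sym sa sb ab.
have [asb bsa] : ~~ [&& elt a s, elt s b & elt b a] /\
                 ~~ [&& elt b s, elt s a & elt a b].
  split; apply/and3P => [[h1 h2 h3]]; move: h3; apply/negP/elt_asym;
    exact: elt_trans h1 h2.
move: asb bsa; rewrite /cyc !elt_fdet ![fdet b _]fdet_swap ![fdet s a]fdet_swap.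
rewrite !oppr_lt0 mulr_gt0_eqsign //.
by move: A0 B0 C0; case: (ltgtP (fdet a s) 0); case: (ltgtP (fdet s b) 0);
  case: (ltgtP (fdet a b) 0).
Qed.

Definition fvert_of (n d : int) : fvert :=
  if d == 0 then None else Some (n%:~R / d%:~R).

Lemma fvert_of_coords n d : coprime `|n| `|d| ->
  exists2 e : int, `|e| = 1 & fnum (fvert_of n d) = e * n /\ fden (fvert_of n d) = e * d.
Proof.
rewrite /fvert_of; have [->|d0] := eqVneq d 0.
  by rewrite /coprime gcdn0 => /eqP n1; exists n; [lia | split => /=; lia].
move=> nd; exists (Num.sg d); first by rewrite normr_sg d0.
by rewrite /= coprimeq_num // coprimeq_den // (negPf d0) -normrEsg.
Qed.

Definition fcomb (k : int) (u v : fvert) : fvert :=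
  fvert_of (fnum u + k * fnum v) (fden u + k * fden v).

Lemma fdet_fcomb k u v : `|k| = 1 -> fadj u v ->
  exists2 e : int, `|e| = 1 &
    fdet u (fcomb k u v) = e * k * fdet u v /\ fdet (fcomb k u v) v = e * fdet u v.
Proof.
rewrite /fcomb fadjE => k1 /eqP uv.
have [|e e1 [n_e d_e]] := @fvert_of_coords (fnum u + k * fnum v) (fden u + k * fden v).
  rewrite -coprimezE; apply/coprimezP.
  exists (- k * fden u * fdet u v, k * fnum u * fdet u v).
  by move: uv; rewrite /fdet /=; nia.
by exists e => //; split; rewrite /fdet n_e d_e; ring.
Qed.

Lemma farey_triangles_on_edge u v : fadj u v -> exists w1 w2,
  [/\ fadj u w1, fadj w1 v, fadj u w2, fadj w2 v & cyc u w1 v != cyc u w2 v].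
Proof.
move=> uv; exists (fcomb 1 u v), (fcomb (-1) u v).
have [e1 e1_1 [u_w1 w1_v]] := fdet_fcomb (normr1 _) uv.
have [e2 e2_1 [u_w2 w2_v]] := fdet_fcomb (normrN1 _) uv.
move: (uv); rewrite fadjE => /eqP uv1.
have [uw1 w1v uw2 w2v] : [/\ fadj u (fcomb 1 u v), fadj (fcomb 1 u v) v,
    fadj u (fcomb (-1) u v) & fadj (fcomb (-1) u v) v].
  by rewrite !fadjE u_w1 w1_v u_w2 w2_v !normrM normrN e1_1 e2_1 uv1.
split => //; rewrite !cyc_fdet ?fadj_neq // ?(fadj_sym _ u) //.
rewrite u_w1 w1_v u_w2 w2_v.
have -> : 0 < e1 * 1 * fdet u v * (e1 * fdet u v) by nia.
have /negPf -> : ~~ (0 < e2 * -1 * fdet u v * (e2 * fdet u v)) by rewrite -leNgt; nia.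
by case: elt.
Qed.

(* By the Plücker identity below, if s and t were on opposite sides of ab the
   two products on its right would have opposite signs, so the left side, a
   product of two units, would have absolute value at least 2. *)
Lemma farey_noncrossing a b s t : fadj a b -> fadj s t ->
  s != a -> s != b -> t != a -> t != b -> cyc a s b = cyc a t b.
Proof.
move=> ab st sa sb ta tb.
have ab' := fadj_neq ab; rewrite !cyc_fdet //; congr (_ == _).
have pluecker : fdet a b * fdet s t = fdet a t * fdet s b - fdet a s * fdet t b.
  by rewrite /fdet; ring.
have [] : [/\ fdet a s != 0, fdet s b != 0, fdet a t != 0 & fdet t b != 0].
  by rewrite !fdet_eq0 !(eq_sym a) sa sb ta tb.
move: ab st pluecker; rewrite !fadjE => /eqP + /eqP.
by move=> *; apply/idP/idP; nia.
Qed.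

Lemma farey_path_side a b s q : fadj a b -> is_path fadjP s q ->
  ~~ has (pred2 a b) (s :: q) -> cyc a s b = cyc a (last s q) b.
Proof.
move=> ab; elim: q s => [|t q IH] s //= [st tq] /norP [/norP [sa sb] avoid].
have /norP [/norP [ta tb] _] := avoid.
by rewrite -IH //; apply: farey_noncrossing.
Qed.

End FareyDeterminant.

Section Geodesics.
Variable G : fvert -> fvert -> Prop.

Lemma is_path_cat x p1 p2 :
  is_path G x (p1 ++ p2) <-> is_path G x p1 /\ is_path G (last x p1) p2.
Proof.
elim: p1 x => [|a p1 IH] x /=; first by split => // [[]].
by rewrite IH; split => [[h [h1 h2]] | [[h h1] h2]].
Qed.

Lemma is_path_of_edges x p :
  (forall p1 v p2, p = p1 ++ v :: p2 -> G (last x p1) v) -> is_path G x p.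
Proof.
elim: p x => [|a p IH] x edge //=; split; first exact: (edge [::] a p).
by apply: IH => p1 v p2 ep; apply: (edge (a :: p1)); rewrite ep.
Qed.

Lemma is_path_sub (H : fvert -> fvert -> Prop) x p :
  (forall u v, G u v -> H u v) -> is_path G x p -> is_path H x p.
Proof. by move=> GH; elim: p x => [|a p IH] x //= [/GH xa /IH]. Qed.

Lemma geodesic_shortcut x p1 p2 p3 r :
  is_geodesic G x (p1 ++ p2 ++ p3) -> is_path G (last x p1) r ->
  last (last x p1) r = last (last x p1) p2 -> (size p2 <= size r)%N.
Proof.
move=> [/is_path_cat [p1P /is_path_cat [_ p3P]] shortest] rP r_last.
have := shortest (p1 ++ r ++ p3); rewrite !size_cat leq_add2l leq_add2r; apply.
  by apply/is_path_cat; split => //; apply/is_path_cat; rewrite r_last.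
by rewrite !last_cat r_last.
Qed.

Lemma geodesic_cut_neq x p1 p2 z z' :
  is_geodesic G x (p1 ++ p2) -> z \in x :: p1 -> z' \in p2 -> z != z'.
Proof.
move=> geo zin z'in; case/splitPl: zin geo => p1a p1b z_last.
case/splitPr: z'in => p2a p2b; rewrite -catA => geo; apply/eqP => zz'.
have := @geodesic_shortcut x p1a (p1b ++ p2a ++ [:: z']) p2b [::].
rewrite -!catA /= z_last !last_cat /= zz' => /(_ geo I erefl).
by rewrite !size_cat /= addn1 addnS.
Qed.

Lemma geodesic_cut_adj x p1 p2 z z' :
  is_geodesic G x (p1 ++ p2) -> z \in x :: p1 -> z' \in p2 -> G z z' ->
  z = last x p1 /\ z' = head z' p2.
Proof.
move=> geo zin z'in zz'; case/splitPl: zin geo => p1a p1b z_last.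
case/splitPr: z'in => p2a p2b; rewrite -catA => geo.
have := @geodesic_shortcut x p1a (p1b ++ p2a ++ [:: z']) p2b [:: z'].
rewrite -!catA /= z_last !last_cat /= => /(_ geo (conj zz' I) erefl).
rewrite !size_cat /= addn1 addnS ltnS leqn0 addn_eq0 => /andP [/nilP -> /nilP ->].
by rewrite z_last.
Qed.

Lemma geodesic_exists x q : is_path G x q ->
  exists r, [/\ is_geodesic G x r, last x r = last x q & (size r <= size q)%N].
Proof.
have [n] := ubnP (size q); elim: n q => // n IH q /ltnSE q_n qP.
have [[r [rP r_last r_q]] | no_shorter] := classic
  (exists r, [/\ is_path G x r, last x r = last x q & (size r < size q)%N]).
  have [s [sG s_last s_r]] := IH r (leq_trans r_q q_n) rP.
  by exists s; rewrite s_last r_last (leq_trans s_r (ltnW r_q)).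
exists q; split => //; split => // r rP r_last; rewrite leqNgt; apply/negP => r_q.
by apply: no_shorter; exists r.
Qed.

End Geodesics.

Lemma geodesic_start_outside_arc x p1 v p2 w :
  is_geodesic fadjP x (p1 ++ v :: p2) -> fadj (last x p1) w -> fadj w v ->
  ~~ in_arc v w (last x p1) x.
Proof.
move=> geo uw wv.
have avoid : ~~ has (pred2 v w) (x :: p1).
  apply/hasPn => z zin /=; apply/norP; split.
    exact: geodesic_cut_neq geo zin (mem_head v p2).
  apply/eqP => zw; have zv : fadjP z v by rewrite zw.
  have [z_u _] := geodesic_cut_adj geo zin (mem_head v p2) zv.
  by move: uw; rewrite -z_u zw => /fadj_neq; rewrite eqxx.
have [/is_path_cat [p1P _] _] := geo.
have /norP [/norP [xv xw] _] := avoid.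
rewrite /in_arc (negPf xv) (negPf xw).
by rewrite (farey_path_side _ p1P avoid) ?eqxx // fadj_sym.
Qed.

Lemma geodesic_end_outside_arc x p1 v p2 w :
  is_geodesic fadjP x (p1 ++ v :: p2) -> fadj (last x p1) w -> fadj w v ->
  ~~ in_arc w (last x p1) v (last v p2).
Proof.
move=> geo uw wv; have u_in := mem_last x p1.
have avoid : ~~ has (pred2 w (last x p1)) (v :: p2).
  apply/hasPn => z zin /=; apply/norP; split; last first.
    by rewrite eq_sym; exact: geodesic_cut_neq geo u_in zin.
  apply/eqP => zw; have uz : fadjP (last x p1) z by rewrite zw.
  have [_ /= z_v] := geodesic_cut_adj geo u_in zin uz.
  by move: wv; rewrite -zw -z_v => /fadj_neq; rewrite eqxx.
have [/is_path_cat [_ [_ p2P]] _] := geo.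
have /norP [yw yu] : ~~ pred2 w (last x p1) (last v p2).
  by apply: (hasPn avoid); exact: mem_last.
rewrite /in_arc (negPf yw) (negPf yu).
by rewrite -(farey_path_side _ p2P avoid) ?eqxx // fadj_sym.
Qed.

Lemma in_arc_two_sides u v w1 w2 z : cyc u w1 v != cyc u w2 v ->
  in_arc u v w1 z -> in_arc u v w2 z -> (z == u) || (z == v).
Proof.
rewrite /in_arc; case: (z == u) (z == v) => [|] [|] //=.
by case: (cyc u z v) (cyc u w1 v) (cyc u w2 v) => [] [] [].
Qed.

Lemma ladder_adj_fadj x y u v : ladder_adj x y u v -> fadjP u v.
Proof. by case=> w [[]]. Qed.

Lemma farey_geodesic_edge_ladder x p1 v p2 :
  ~~ fadj x (last v p2) -> is_geodesic fadjP x (p1 ++ v :: p2) ->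
  ladder_adj x (last v p2) (last x p1) v.
Proof.
set u := last x p1; set y := last v p2 => xy geo.
have [/is_path_cat [_ [uv _]] _] := geo.
have x_y : x != y := geodesic_cut_neq geo (mem_head x p1) (mem_last v p2).
have arcs w : fadj u w -> fadj w v -> ~~ geod_meets x y u v w ->
    in_arc u v w x && in_arc u v w y.
  move=> uw wv; rewrite negbK => /or3P [//| /andP [x_in _] | /andP [_ y_in]].
    by move: x_in; rewrite (negPf (geodesic_start_outside_arc geo uw wv)).
  by move: y_in; rewrite (negPf (geodesic_end_outside_arc geo uw wv)).
have [w1 [w2 [uw1 w1v uw2 w2v sides]]] := farey_triangles_on_edge uv.
have triangle w : fadj u w -> fadj w v -> farey_triangle u v w.
  by move=> uw wv; do !split; rewrite // fadj_sym.
have [meets1 | /(arcs w1 uw1 w1v) /andP [x1 y1]] := boolP (geod_meets x y u v w1).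
  by exists w1; split; first exact: triangle.
have [meets2 | /(arcs w2 uw2 w2v) /andP [x2 y2]] := boolP (geod_meets x y u v w2).
  by exists w2; split; first exact: triangle.
move: xy x_y; case/orP: (in_arc_two_sides sides x1 x2) => /eqP ->;
  case/orP: (in_arc_two_sides sides y1 y2) => /eqP ->;
  by rewrite ?eqxx // ?uv // fadj_sym uv.
Qed.

Lemma farey_geodesic_ladder_path x p :
  ~~ fadj x (last x p) -> is_geodesic fadjP x p -> is_path (ladder_adj x (last x p)) x p.
Proof.
move=> xy geo; apply: is_path_of_edges => p1 v p2 ep.
by move: xy geo; rewrite ep last_cat /=; apply: farey_geodesic_edge_ladder.
Qed.

Theorem mainTheorem3 (x y : fvert) (p : seq fvert) :
  (* d_C(x,y) >= 2 *)
  (forall q, is_path fadjP x q -> last x q = y -> 2 <= size q) ->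
  (* P = x :: p is a path in F joining x and y *)
  is_path fadjP x p -> last x p = y ->
  (is_geodesic fadjP x p <->
   (is_path (ladder_adj x y) x p /\ is_geodesic (ladder_adj x y) x p)).
Proof.
move=> dist2 pP p_y.
have xy : ~~ fadj x y by apply/negP => xy; have := dist2 [:: y] (conj xy I) erefl.
have in_ladder q : is_geodesic fadjP x q -> last x q = y -> is_path (ladder_adj x y) x q.
  by move=> geo q_y; move: xy; rewrite -q_y => xy; apply: farey_geodesic_ladder_path.
split=> [geo | [_ [_ shortest]]].
  have lP := in_ladder p geo p_y; split=> //; split=> // q qP.
  by apply: geo.2; apply: is_path_sub qP => u v; apply: ladder_adj_fadj.
split=> // q qP q_p.
have [r [geo r_q size_r]] := geodesic_exists qP.
apply: leq_trans size_r; apply: shortest; last by rewrite r_q.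
by apply: in_ladder; rewrite // r_q q_p.
Qed.
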